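(* Let $p$ be a prime, $a\ge 1$ an integer, and $n=p^a$. With $L$ and $R$ the matrices indexed by $P(n)$ defined in the context, \[\dim\ker (RL^{-1}) \ge \binom{a}{2}=\frac{a(a-1)}{2}.\]
   Context: Let $\phi$ denote Euler's totient function. For a positive integer $n$ let $P(n)=\{(i,j): j\mid n,\ i\mid j\}$. Define square matrices $L$ and $R$ with rows and columns indexed by $P(n)$ as follows. For a row index $(i,j)$ and a column index $(d,c)$: $L_{(i,j)}^{(d,c)} = \phi(d)\,\frac{n}{\operatorname{lcm}(j,c)}$ if $d\mid i$ and $j\mid \operatorname{lcm}(i,c)$, and $0$ otherwise. For the row $(i,j)$, let $v$ be the largest divisor of $i$ coprime with $j/i$ and put $u=i/v$. Then $R_{(i,j)}^{(e,c)} = u\,\phi(ev/j)\,\frac{n}{\operatorname{lcm}(j,c)}$ if $(j/v)\mid e$, $e\mid j$ and $j\mid\operatorname{lcm}(i,c)$, and $0$ otherwise. The matrix $L$ is invertible. *)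

From mathcomp Require Import all_boot all_order all_algebra.
Set Implicit Arguments. Unset Strict Implicit. Unset Printing Implicit Defensive.
Import GRing.Theory Num.Theory.

Definition Pn (n : nat) : seq (nat * nat) :=
  [seq (i, j) | j <- divisors n, i <- divisors j].

Definition Pidx (n : nat) (k : nat) : nat * nat := nth (0, 0) (Pn n) k.

Definition vpart (i m : nat) : nat :=
  \max_(d <- divisors i | coprime d m) d.

Definition Lentry (n : nat) (r col : nat * nat) : nat :=
  let: (i, j) := r in let: (d, c) := col in
  if (d %| i) && (j %| lcmn i c) then totient d * (n %/ lcmn j c) else 0.

Definition Rentry (n : nat) (r col : nat * nat) : nat :=
  let: (i, j) := r in let: (e, c) := col in
  let v := vpart i (j %/ i) in
  let u := i %/ v in
  if [&& (j %/ v) %| e, e %| j & j %| lcmn i c]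
  then u * totient (e * v %/ j) * (n %/ lcmn j c) else 0.

Definition Lmx (n : nat) : 'M[rat]_(size (Pn n)) :=
  \matrix_(r, s) ((Lentry n (Pidx n r) (Pidx n s))%:R)%R.

Definition Rmx (n : nat) : 'M[rat]_(size (Pn n)) :=
  \matrix_(r, s) ((Rentry n (Pidx n r) (Pidx n s))%:R)%R.

From mathcomp Require Import all_boot all_order all_algebra zify.
Set Implicit Arguments. Unset Strict Implicit. Unset Printing Implicit Defensive.
Import GRing.Theory.

(* For n = p^a the indices are pairs (p^s, p^t) with s <= t <= a.  When
   0 < s < t the largest divisor of p^s coprime with p^(t-s) is 1, so the
   row of R indexed by (p^s, p^t) is p^s times the row indexed by (1, p^t).
   There are C(a,2) such indices, hence rank R <= |P(n)| - C(a,2), and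
   rank (R L^-1) <= rank R gives the bound on the kernel. *)

Lemma mxrank_leq_card_spanning_rows (F : fieldType) m n (A : 'M[F]_(m, n))
    (B : pred 'I_m) :
  (forall k, B k -> exists2 l, ~~ B l & (row k A <= row l A)%MS) ->
  \rank A <= #|[predC B]|.
Proof.
move=> spanB.
have A_sub : (A <= \sum_(l | ~~ B l) <<row l A>>)%MS.
  apply/row_subP=> k; case Bk: (B k).
    have [l nBl kl] := spanB k Bk.
    by apply: submx_trans kl _; apply: (sumsmx_sup l) => //; rewrite genmxE.
  by apply: (sumsmx_sup k); rewrite ?Bk ?genmxE.
apply: leq_trans (mxrankS A_sub) _; rewrite -sum1_card.
elim/big_ind2: _ => [|r1 d1 r2 d2 le1 le2|l _]; first by rewrite mxrank0.
  exact: leq_trans (mxrank_adds_leqif _ _) (leq_add le1 le2).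
by rewrite genmxE rank_leq_row.
Qed.

Lemma mem_Pn n i j : 0 < n -> ((i, j) \in Pn n) = (j %| n) && (i %| j).
Proof.
move=> n_gt0; apply/allpairsPdep/andP => [[j' [i' [j'n i'j' [-> ->]]]] | [jn ij]].
  move: j'n i'j'; rewrite -dvdn_divisors // => j'n.
  by rewrite -dvdn_divisors ?(dvdn_gt0 n_gt0 j'n) // => i'j'.
have j_gt0 := dvdn_gt0 n_gt0 jn.
by exists j, i; rewrite -!dvdn_divisors.
Qed.

Definition redundant_index (x : nat * nat) := 1 < x.1 < x.2.

Section PrimePower.

Variable p : nat.
Hypothesis p_prime : prime p.

Let p_gt0 : 0 < p. Proof. exact: prime_gt0. Qed.
Let p_gt1 : 1 < p. Proof. exact: prime_gt1. Qed.

Lemma divisors_pexp m : divisors (p ^ m) = [seq p ^ i | i <- iota 0 m.+1].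
Proof.
apply: (@irr_sorted_eq _ ltn); first exact: ltn_trans.
- exact: ltnn.
- exact: sorted_divisors_ltn.
- rewrite sorted_map; apply: sub_sorted (iota_ltn_sorted 0 m.+1).
  by move=> x y /=; rewrite ltn_exp2l.
move=> d; rewrite -dvdn_divisors ?expn_gt0 ?p_gt0 //.
apply/dvdn_pfactor/mapP => // -[i].
  by move=> im ->; exists i; rewrite // mem_iota.
by rewrite mem_iota => /andP[_ im] ->; exists i.
Qed.

Lemma Pn_pexpP a x :
  x \in Pn (p ^ a) -> exists s t, [/\ s <= t, t <= a & x = (p ^ s, p ^ t)].
Proof.
case: x => i j; rewrite mem_Pn ?expn_gt0 ?p_gt0 // => /andP[].
case/dvdn_pfactor=> // t ta ->; case/dvdn_pfactor=> // s st ->.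
by exists s, t.
Qed.

Lemma vpart1 m : vpart 1 m = 1.
Proof. by rewrite /vpart (_ : divisors 1 = [:: 1]) // big_cons big_nil coprime1n. Qed.

Lemma vpart_pexp s k : 0 < k -> vpart (p ^ s) (p ^ k) = 1.
Proof.
move=> k_gt0; rewrite /vpart divisors_pexp big_map /= big_cons /= coprime1n.
rewrite big1_seq ?maxn0 // => i /andP[] + /[!mem_iota] /andP[i_gt0 _].
by rewrite coprime_pexpl // coprime_pexpr // prime_coprime // dvdnn.
Qed.

Lemma dvdn_lcm_pexp s t r :
  s < t -> (p ^ t %| lcmn (p ^ s) (p ^ r)) = (p ^ t %| p ^ r).
Proof.
move=> st; case: (leqP r s) => rs.
  rewrite (lcmn_idPl (dvdn_exp2l _ rs)).
  by rewrite !dvdn_Pexp2l // leqNgt st leqNgt (leq_ltn_trans rs st).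
by rewrite (lcmn_idPr (dvdn_exp2l _ (ltnW rs))).
Qed.

Lemma Rentry_pexp n s t e r : 0 < s < t ->
  Rentry n (p ^ s, p ^ t) (e, p ^ r) = p ^ s * Rentry n (1, p ^ t) (e, p ^ r).
Proof.
case/andP=> s_gt0 st; rewrite /Rentry -expnB ?(ltnW st) //.
rewrite vpart_pexp ?subn_gt0 // divn1 vpart1 !divn1 lcm1n dvdn_lcm_pexp //.
by case: ifP => _; rewrite ?muln0 // mul1n mulnA.
Qed.

Lemma row_Rmx_redundant a (k : 'I_(size (Pn (p ^ a)))) :
  redundant_index (Pidx (p ^ a) k) ->
  exists2 l : 'I_(size (Pn (p ^ a))), ~~ redundant_index (Pidx (p ^ a) l) &
    (row k (Rmx (p ^ a)) <= row l (Rmx (p ^ a)))%MS.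
Proof.
have memP (k' : 'I_(size (Pn (p ^ a)))) : Pidx (p ^ a) k' \in Pn (p ^ a).
  exact: mem_nth.
have [s [t [st ta Pidx_k]]] := Pn_pexpP (memP k).
rewrite Pidx_k /redundant_index /= -{1}(expn0 p) !ltn_exp2l // => sst.
have mem1t : (1, p ^ t) \in Pn (p ^ a).
  by rewrite mem_Pn ?expn_gt0 ?p_gt0 // dvd1n dvdn_exp2l.
have idx_lt : index (1, p ^ t) (Pn (p ^ a)) < size (Pn (p ^ a)) by rewrite index_mem.
have Pidx_l : Pidx (p ^ a) (Ordinal idx_lt) = (1, p ^ t) by rewrite /Pidx nth_index.
exists (Ordinal idx_lt); first by rewrite Pidx_l /redundant_index ltnn.
suff -> : row k (Rmx (p ^ a)) = ((p ^ s)%:R *: row (Ordinal idx_lt) (Rmx (p ^ a)))%R.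
  exact: scalemx_sub.
apply/rowP => col; rewrite !mxE Pidx_k Pidx_l.
have [s' [r [_ _ ->]]] := Pn_pexpP (memP col).
by rewrite Rentry_pexp // natrM.
Qed.

Lemma count_iota_interior t : count (fun s => 0 < s < t) (iota 0 t.+1) = t.-1.
Proof.
case: t => // t; rewrite -(addn1 t.+1) iotaD count_cat /= ltnn !addn0.
rewrite (eq_in_count (a2 := predT)) ?count_predT ?size_iota // => x.
by rewrite mem_iota => /andP[-> xt]; rewrite ltnS.
Qed.

Lemma sumn_iota_pred a : sumn [seq t.-1 | t <- iota 0 a.+1] = 'C(a, 2).
Proof.
elim: a => // a IH; rewrite -(addn1 a.+1) iotaD map_cat sumn_cat IH /=.
by rewrite addn0 binS bin1 addnC.
Qed.

Lemma count_redundant_Pn a : count redundant_index (Pn (p ^ a)) = 'C(a, 2).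
Proof.
rewrite /Pn count_flatten divisors_pexp -map_comp -sumn_iota_pred -map_comp.
congr sumn; apply: eq_map => t /=.
rewrite divisors_pexp -map_comp count_map -count_iota_interior.
by apply: eq_count => s /=; rewrite /redundant_index /= -{1}(expn0 p) !ltn_exp2l.
Qed.

End PrimePower.

Theorem proposition5p1 (p a : nat) :
  prime p -> 1 <= a ->
  'C(a, 2) <= \rank (kermx (Rmx (p ^ a) *m invmx (Lmx (p ^ a)))).
Proof.
move=> p_prime _.
pose B : pred 'I_(size (Pn (p ^ a))) := fun k => redundant_index (Pidx (p ^ a) k).
have rank_R : \rank (Rmx (p ^ a)) <= #|[predC B]|.
  exact: mxrank_leq_card_spanning_rows (row_Rmx_redundant p_prime (a := a)).
have card_B : #|B| = 'C(a, 2).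
  rewrite -(count_redundant_Pn p_prime a) -sum1_card -sum1_count.
  by rewrite (big_nth (0, 0)) big_mkord.
have rank_RL := leq_trans (mxrankM_maxl _ (invmx (Lmx (p ^ a)))) rank_R.
rewrite mxrank_ker; apply: leq_trans (leq_sub2l _ rank_RL).
have size_Pn : 'C(a, 2) + #|[predC B]| = size (Pn (p ^ a)).
  by rewrite -card_B cardC card_ord.
lia.
Qed.
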